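(* Fix $\varepsilon\in\mathbb{R}^n_{\ge0}$ and $\delta\in(0,1]$, and let $\mathcal{C}^\star\subseteq\mathcal{R}$ be the set of all rankings that satisfy the $(\varepsilon,\delta)$-constraint. For any non-empty subset $\mathcal{C}\subseteq\mathcal{R}$ with $\mathcal{C}\ne\mathcal{C}^\star$, at least one of the following holds: (i) there exists a matrix $W\in\mathbb{R}^{m\times n}_{\ge0}$ such that $R_{\mathcal{C}}$ does not satisfy the $(\varepsilon,\delta)$-constraint; (ii) there exists a matrix $W\in\mathbb{R}^{m\times n}_{\ge0}$ such that $\langle R_{\mathcal{C}},W\rangle\le\langle R_{\mathcal{C}^\star},W\rangle\cdot(1-\frac1n)$.
   Context: $\mathcal{R}$ is the set of rankings: matrices $R\in\{0,1\}^{m\times n}$ with $\sum_{j} R_{ij}\le 1$ for every item $i\in[m]$ and $\sum_{i} R_{ij}=1$ for every position $j\in[n]$; $\langle R,W\rangle=\sum_{i,j}R_{ij}W_{ij}$. For a non-empty $\mathcal{C}\subseteq\mathcal{R}$ and utility matrix $W$, $R_{\mathcal{C}}:=\arg\max_{R\in\mathcal{C}}\langle R,W\rangle$. Noise model: given $P\in[0,1]^{m\times p}$, the groups $G_1,\dots,G_p\subseteq[m]$ are random with $\Pr[i\in G_\ell]=P_{i\ell}$, events concerning distinct items independent; given $U\in\mathbb{Z}_+^{n\times p}$, a ranking $R$ satisfies the $(\varepsilon,\delta)$-constraint if with probability at least $1-\delta$, $\sum_{i\in G_\ell}\sum_{j=1}^kR_{ij}\le U_{k\ell}(1+\varepsilon_k)$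 for all $k\in[n],\ell\in[p]$. *)

From mathcomp Require Import all_boot all_order all_algebra.
Set Implicit Arguments. Unset Strict Implicit. Unset Printing Implicit Defensive.
Import Order.TTheory GRing.Theory Num.Theory.
Local Open Scope ring_scope.

Section Defs.
Variables (R : realFieldType) (m n p : nat).

(* A ranking: 0/1 matrix, each item in at most one position, each position
   filled by exactly one item. *)
Definition is_ranking (X : 'M[R]_(m, n)) : Prop :=
  (forall i j, X i j = 0 \/ X i j = 1) /\
  (forall i : 'I_m, \sum_(j < n) X i j <= 1) /\
  (forall j : 'I_n, \sum_(i < m) X i j = 1).

Definition inner (X W : 'M[R]_(m, n)) : R :=
  \sum_(i < m) \sum_(j < n) X i j * W i j.

Definition is_argmax (C : 'M[R]_(m, n) -> Prop) (W X : 'M[R]_(m, n)) : Prop :=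
  C X /\ forall Y, C Y -> inner Y W <= inner X W.

(* A realization of the random groups: g i l = true iff item i is in G_l. *)
Definition outcome := {ffun 'I_m -> {ffun 'I_p -> bool}}.

(* Noise model: D i is the distribution of the membership vector of item i
   (over subsets of the p groups); distinct items are independent, so the
   probability of a realization is the product over items. *)
Definition is_noise_model (P : 'M[R]_(m, p))
    (D : 'I_m -> {ffun 'I_p -> bool} -> R) : Prop :=
  (forall i s, 0 <= D i s) /\
  (forall i, \sum_(s : {ffun 'I_p -> bool}) D i s = 1) /\
  (forall i l, \sum_(s : {ffun 'I_p -> bool} | s l) D i s = P i l).

Definition prob (D : 'I_m -> {ffun 'I_p -> bool} -> R) (E : pred outcome) : R :=
  \sum_(g : outcome | E g) \prod_(i < m) D i (g i).

(* For all k in [n] (0-indexed: top k+1 positions) and all groups l: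
   sum_{i in G_l} sum_{j <= k} X i j <= U k l * (1 + eps k). *)
Definition constraint_event (U : 'M[nat]_(n, p)) (eps : 'I_n -> R)
    (X : 'M[R]_(m, n)) : pred outcome :=
  fun g => [forall k : 'I_n, forall l : 'I_p,
    \sum_(i < m | g i l) \sum_(j < n | (j <= k)%N) X i j
      <= (U k l)%:R * (1 + eps k)].

Definition satisfies_constraint (D : 'I_m -> {ffun 'I_p -> bool} -> R)
    (U : 'M[nat]_(n, p)) (eps : 'I_n -> R) (delta : R) (X : 'M[R]_(m, n)) : Prop :=
  1 - delta <= prob D (constraint_event U eps X).

Definition Cstar D U eps delta : 'M[R]_(m, n) -> Prop :=
  fun X => is_ranking X /\ satisfies_constraint D U eps delta X.

End Defs.

(* Take W to be a ranking X0 on which C and C* disagree.  For rankings,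
   <X, X0> = n if X = X0 and <X, X0> <= n - 1 otherwise.  If X0 lies in C but
   not in C*, the C-maximiser for W is X0 itself, which violates the
   constraint.  If X0 lies in C* but not in C, the C-maximiser has value at
   most n - 1, while the C*-optimum is at least <X0, X0> = n. *)

From Stdlib Require Import Classical.
From mathcomp Require Import all_boot all_order all_algebra.
Import Order.TTheory GRing.Theory Num.Theory.
Set Implicit Arguments. Unset Strict Implicit. Unset Printing Implicit Defensive.
Local Open Scope ring_scope.

Lemma ler_term_sum (R : numDomainType) (I : finType) (F : I -> R) (i0 : I) :
  (forall i, 0 <= F i) -> F i0 <= \sum_i F i.
Proof.
move=> F_ge0; rewrite (bigD1 i0) //= lerDl.
by apply: sumr_ge0 => i _.
Qed.

Lemma natrB1_le_mul_1BV (R : realFieldType) (n : nat) (a : R) :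
  n%:R <= a -> n%:R - 1 <= a * (1 - n%:R^-1).
Proof.
have [-> | n_gt0] := posnP n => na.
  by rewrite invr0 subr0 mulr1 sub0r (le_trans _ na) // lerN10.
have -> : n%:R - 1 = n%:R * (1 - n%:R^-1) :> R.
  by rewrite mulrBr mulr1 mulfV // pnatr_eq0 -lt0n.
by apply: ler_wpM2r na; rewrite subr_ge0 invf_le1 ?ler1n ?ltr0n.
Qed.

Section Rankings.
Variables (R : realFieldType) (m n : nat).
Implicit Types X Y : 'M[R]_(m, n).

Lemma innerC X Y : inner X Y = inner Y X.
Proof. by apply: eq_bigr => i _; apply: eq_bigr => j _; rewrite mulrC. Qed.

Lemma ranking_entry_itv X i j : is_ranking X -> 0 <= X i j <= 1.
Proof. by case=> X01 _; case: (X01 i j) => ->; rewrite ?lexx ?ler01. Qed.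

Lemma sum_ranking X : is_ranking X -> \sum_i \sum_j X i j = n%:R.
Proof.
case=> _ [_ X_col]; rewrite exchange_big /=.
by rewrite (eq_bigr (fun=> 1)) // sumr_const card_ord.
Qed.

Lemma inner_ranking_gap X Y : is_ranking X ->
  n%:R - inner X Y = \sum_i \sum_j X i j * (1 - Y i j).
Proof.
move=> /sum_ranking <-; rewrite /inner -sumrB.
by apply: eq_bigr => i _; rewrite -sumrB; apply: eq_bigr => j _; rewrite mulrBr mulr1.
Qed.

Lemma inner_ranking_self X : is_ranking X -> inner X X = n%:R.
Proof.
move=> X_rk; apply/eqP; rewrite eq_sym -subr_eq0 inner_ranking_gap //.
apply/eqP/big1 => i _; apply: big1 => j _.
by case: X_rk => X01 _; case: (X01 i j) => ->; rewrite ?mul0r ?subrr ?mulr0.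
Qed.

Lemma inner_ranking_le_predn X Y i j : is_ranking X -> is_ranking Y ->
  X i j = 1 -> Y i j = 0 -> inner X Y <= n%:R - 1.
Proof.
move=> X_rk Y_rk Xij Yij; rewrite lerBrDr -lerBrDl inner_ranking_gap //.
have term_ge0 i' j' : 0 <= X i' j' * (1 - Y i' j').
  have /andP[X_ge0 _] := ranking_entry_itv i' j' X_rk.
  have /andP[_ Y_le1] := ranking_entry_itv i' j' Y_rk.
  by rewrite mulr_ge0 ?subr_ge0.
have row_ge0 i' : 0 <= \sum_j' X i' j' * (1 - Y i' j').
  by apply: sumr_ge0 => j' _.
apply: (le_trans _ (ler_term_sum i row_ge0)).
by apply: (le_trans _ (ler_term_sum j (term_ge0 i))); rewrite Xij Yij subr0 mulr1.
Qed.

Lemma inner_ranking_neq X Y : is_ranking X -> is_ranking Y -> X != Y ->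
  inner X Y <= n%:R - 1.
Proof.
move=> X_rk Y_rk XY.
have /existsP[i /existsP[j XYij]] : [exists i, exists j, X i j != Y i j].
  apply: contraNT XY => /existsPn XY; apply/eqP/matrixP => i j.
  by apply/eqP; move/existsPn/(_ j): (XY i); rewrite negbK.
have [X01 _] := X_rk; have [Y01 _] := Y_rk.
case: (X01 i j) (Y01 i j) XYij => Xij [] Yij; rewrite Xij Yij ?eqxx // => _.
  by rewrite innerC; apply: inner_ranking_le_predn Y_rk X_rk Yij Xij.
exact: inner_ranking_le_predn X_rk Y_rk Xij Yij.
Qed.

Lemma is_argmax_ranking_self (C : 'M[R]_(m, n) -> Prop) X Y :
  (forall Z, C Z -> is_ranking Z) -> C Y -> is_argmax C Y X -> X = Y.
Proof.
move=> C_rk CY [CX X_max]; apply/eqP; apply: contraTT (X_max _ CY) => XY.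
rewrite -ltNge (inner_ranking_self (C_rk _ CY)).
by apply: le_lt_trans (inner_ranking_neq (C_rk _ CX) (C_rk _ CY) XY) _; rewrite gtrBl.
Qed.

End Rankings.

Theorem proposition7p2 (R : realFieldType) (m n p : nat)
  (P : 'M[R]_(m, p)) (D : 'I_m -> {ffun 'I_p -> bool} -> R)
  (U : 'M[nat]_(n, p)) (eps : 'I_n -> R) (delta : R)
  (C : 'M[R]_(m, n) -> Prop) :
  (forall i l, 0 <= P i l <= 1) ->
  is_noise_model P D ->
  (forall k, 0 <= eps k) ->
  0 < delta <= 1 ->
  (forall X, C X -> is_ranking X) ->
  (exists X, C X) ->
  ~ (forall X, C X <-> Cstar D U eps delta X) ->
  (exists W : 'M[R]_(m, n), (forall i j, 0 <= W i j) /\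
     forall X, is_argmax C W X -> ~ satisfies_constraint D U eps delta X)
  \/
  (exists W : 'M[R]_(m, n), (forall i j, 0 <= W i j) /\
     forall X Xs, is_argmax C W X -> is_argmax (Cstar D U eps delta) W Xs ->
       inner X W <= inner Xs W * (1 - n%:R^-1)).
Proof.
move=> _ _ _ _ C_rk _ C_neq.
have [X0 X0_diff] := not_all_ex_not _ _ C_neq.
have X0_ge0 i j : is_ranking X0 -> 0 <= X0 i j.
  by move=> /(ranking_entry_itv i j) /andP[].
case: (classic (C X0)) => CX0.
- left; exists X0; split=> [i j|X X_max]; first exact/X0_ge0/C_rk.
  rewrite (is_argmax_ranking_self C_rk CX0 X_max) => X0_sat.
  by apply: X0_diff; split=> // _; split=> //; apply: C_rk.
- have CsX0 : Cstar D U eps delta X0.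
    by apply: NNPP => CsX0; apply: X0_diff; split=> [/CX0|/CsX0] [].
  have [X0_rk _] := CsX0.
  right; exists X0; split=> [i j|X Xs [CX _] [_ Xs_max]]; first exact: X0_ge0.
  have XX0 : X != X0 by apply/eqP => eX; apply: CX0; rewrite -eX.
  apply: le_trans (inner_ranking_neq (C_rk _ CX) X0_rk XX0) _.
  by apply: natrB1_le_mul_1BV; rewrite -(inner_ranking_self X0_rk) Xs_max.
Qed.
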